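(* There exist absolute constants $C_0,C_1>0$ such that for every $c=-2-t$ with $0<t<1$ the following hold: (a) $|r_n(c)|\le 2+C_0\,4^{n-1}t$ for all $1\le n\le k(c)$; (b) $t\le C_1 4^{-k(c)}$.
   Context: For real $c$ let $r_n(c)=f_c^{\circ n}(0)$ where $f_c(z)=z^2+c$; thus $r_1(c)=c$ and $r_{n+1}(c)=r_n(c)^2+c$. For $-3<c<-2$, $k(c)$ denotes the smallest positive integer $k$ such that $r_{k+1}(c)/r_k(c)\ge 36$. *)

From Stdlib Require Import Reals.
Open Scope R_scope.

(* r n c = f_c^{o n}(0), f_c(z) = z^2 + c.  So r 0 c = 0, r 1 c = c,
   r (n+1) c = (r n c)^2 + c. *)
Fixpoint r (n : nat) (c : R) : R :=
  match n with
  | O => 0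
  | S m => (r m c) ^ 2 + c
  end.

Definition is_k (c : R) (k : nat) : Prop :=
  (1 <= k)%nat /\
  r (S k) c / r k c >= 36 /\
  (forall j : nat, (1 <= j)%nat -> (j < k)%nat -> r (S j) c / r j c < 36).

(* Write c = -2 - t and e_n = r_n(c) - 2 for n >= 2, so that e_2 = 3t + t^2 and
   e_(n+1) = e_n^2 + 4 e_n - t.  This gives e_n >= 4^(n-2) (8t/3) from below, and
   from above the weighted quantity e_n exp(-e_n/8) is at most 4^(n-1) t, because
   e' exp(-e'/8) <= 4 e (1 + e/4) exp(-3e/8) <= 4 e exp(-e/8).  Before the ratio
   r_(n+1)/r_n reaches 36 the orbit stays below 37, so up to n = k(c) the excess is
   at most 1400 and the exponential weight costs at most the constant exp 175;
   the lower bound at n = k(c) - 1 gives 4^k(c) t <= 840. *)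
From Stdlib Require Import Reals Lra Lia Psatz Classical Wf_nat.
Open Scope R_scope.

Lemma exp_le_compat (x y : R) : x <= y -> exp x <= exp y.
Proof.
  intros [Hlt | ->]; [left; apply exp_increasing; exact Hlt | lra].
Qed.

Lemma weighted_step_le (t e : R) : 0 <= t -> t <= e ->
  (e ^ 2 + 4 * e - t) * exp (- (e ^ 2 + 4 * e - t) / 8) <= 4 * (e * exp (- e / 8)).
Proof.
  intros Ht Hte.
  set (e' := e ^ 2 + 4 * e - t).
  set (A := exp (- e / 8)); set (B := exp (- e / 4)).
  assert (HA : 0 < A) by apply exp_pos.
  assert (HB : 0 < B) by apply exp_pos.
  assert (He' : 0 <= e') by (unfold e'; nra).
  assert (Hdecay : exp (- e' / 8) <= A * B).
  { unfold A, B; rewrite <- exp_plus; apply exp_le_compat; unfold e'; nra. }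
  assert (HB1 : (1 + e / 4) * B <= 1).
  { assert (Hinv : B * exp (e / 4) = 1).
    { unfold B; rewrite <- exp_plus; replace (- e / 4 + e / 4) with 0 by field.
      apply exp_0. }
    pose proof (exp_ineq1_le (e / 4)); nra. }
  assert (Hgrow : e' <= 4 * e * (1 + e / 4)) by (unfold e'; nra).
  apply Rle_trans with (e' * (A * B)); [apply Rmult_le_compat_l; assumption |].
  apply Rle_trans with (4 * (e * A) * ((1 + e / 4) * B)).
  - replace (4 * (e * A) * ((1 + e / 4) * B)) with (4 * e * (1 + e / 4) * (A * B)) by ring.
    apply Rmult_le_compat_r; nra.
  - assert (0 <= e * A) by nra; nra.
Qed.

Lemma small_of_ratio_lt_36 (x c : R) : 0 < x -> -3 <= c ->
  (x ^ 2 + c) / x < 36 -> x < 37.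
Proof.
  intros Hx Hc Hq.
  assert (x ^ 2 + c < 36 * x).
  { replace (x ^ 2 + c) with ((x ^ 2 + c) / x * x) by (field; lra); nra. }
  nra.
Qed.

Lemma ratio_ge_36_of_large (x c : R) : 42 <= x -> -3 <= c -> (x ^ 2 + c) / x >= 36.
Proof.
  intros Hx Hc; apply Rle_ge.
  apply Rmult_le_reg_r with x; [lra |].
  unfold Rdiv; rewrite Rmult_assoc, Rinv_l by lra; nra.
Qed.

Section Orbit.

Variable t : R.
Hypothesis t_pos : 0 < t.
Hypothesis t_lt_1 : t < 1.

Let c := -2 - t.

Lemma r_2 : r 2 c = 2 + 3 * t + t ^ 2.
Proof. unfold c; simpl; ring. Qed.

Lemma r_succ_sub_2 (n : nat) :
  r (S n) c - 2 = (r n c - 2) ^ 2 + 4 * (r n c - 2) - t.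
Proof. unfold c; simpl; ring. Qed.

Lemma r_sub_2_lower (m : nat) : 4 ^ m * (8 * t / 3) <= r (m + 2) c - 2 - t / 3.
Proof.
  induction m as [| m IH].
  - rewrite Nat.add_0_l, r_2; simpl; nra.
  - replace (S m + 2)%nat with (S (m + 2)) by lia.
    rewrite r_succ_sub_2; simpl (4 ^ S m).
    pose proof (pow2_ge_0 (r (m + 2) c - 2)); nra.
Qed.

Lemma r_sub_2_ge (n : nat) : (2 <= n)%nat -> 3 * t <= r n c - 2.
Proof.
  intros Hn; replace n with ((n - 2) + 2)%nat by lia.
  pose proof (r_sub_2_lower (n - 2)).
  pose proof (pow_R1_Rle 4 (n - 2) ltac:(lra)); nra.
Qed.

Lemma r_sub_2_weighted_le (m : nat) :
  (r (m + 2) c - 2) * exp (- (r (m + 2) c - 2) / 8) <= 4 ^ m * (4 * t).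
Proof.
  induction m as [| m IH].
  - rewrite Nat.add_0_l, r_2; replace (2 + 3 * t + t ^ 2 - 2) with (3 * t + t ^ 2) by ring.
    assert (exp (- (3 * t + t ^ 2) / 8) <= 1).
    { rewrite <- exp_0; apply exp_le_compat; nra. }
    assert (3 * t + t ^ 2 <= 4 * t) by nra.
    pose proof (exp_pos (- (3 * t + t ^ 2) / 8)); rewrite pow_O; nra.
  - replace (S m + 2)%nat with (S (m + 2)) by lia.
    rewrite r_succ_sub_2; simpl (4 ^ S m).
    pose proof (r_sub_2_ge (m + 2) ltac:(lia)).
    pose proof (weighted_step_le t (r (m + 2) c - 2) ltac:(lra) ltac:(lra)); lra.
Qed.

Lemma r_sub_2_le (m : nat) : r (m + 2) c - 2 <= 1400 ->
  r (m + 2) c - 2 <= exp 175 * 4 ^ (m + 1) * t.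
Proof.
  intros Hm; pose proof (r_sub_2_weighted_le m) as Hw.
  set (e := r (m + 2) c - 2) in *.
  assert (Hinv : exp (- e / 8) * exp (e / 8) = 1).
  { rewrite <- exp_plus; replace (- e / 8 + e / 8) with 0 by field; apply exp_0. }
  assert (exp (e / 8) <= exp 175) by (apply exp_le_compat; lra).
  pose proof (exp_pos (e / 8)).
  assert (0 < 4 ^ m) by (apply pow_lt; lra).
  rewrite pow_add, pow_1.
  assert (e <= 4 ^ m * (4 * t) * exp (e / 8)).
  { replace e with (e * exp (- e / 8) * exp (e / 8)) at 1
      by (rewrite Rmult_assoc, Hinv; ring).
    apply Rmult_le_compat_r; lra. }
  assert (0 <= 4 ^ m * (4 * t)) by nra.
  nra.
Qed.

Lemma exists_is_k : exists k, is_k c k.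
Proof.
  set (P := fun j => (1 <= j)%nat /\ r (S j) c / r j c >= 36).
  assert (HP : exists j, P j).
  { destruct (INR_archimed t 15 t_pos) as [m Hm].
    exists (m + 2)%nat; split; [lia |].
    pose proof (r_sub_2_lower m).
    pose proof (poly m 3 ltac:(lra)) as Hgrowth; replace (1 + 3) with 4 in Hgrowth by ring.
    apply ratio_ge_36_of_large; [| unfold c; lra].
    assert (Hmul : (1 + INR m * 3) * t <= 4 ^ m * t) by (apply Rmult_le_compat_r; lra).
    nra. }
  destruct (dec_inh_nat_subset_has_unique_least_element P (fun j => classic (P j)) HP)
    as [k [[[Hk1 Hk] Hleast] _]].
  exists k; repeat split; [exact Hk1 | exact Hk |].
  intros j Hj1 Hjk; apply Rnot_ge_lt; intros Hj.
  specialize (Hleast j (conj Hj1 Hj)); lia.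
Qed.

Section Escape.

Variable k : nat.
Hypothesis Hk : is_k c k.

Lemma is_k_ge_2 : (2 <= k)%nat.
Proof.
  destruct Hk as [Hk1 [Hratio _]].
  destruct (Nat.eq_dec k 1) as [-> | ]; [exfalso | lia].
  rewrite r_2 in Hratio; replace (r 1 c) with (- (2 + t)) in Hratio by (unfold c; simpl; ring).
  unfold Rdiv in Hratio; rewrite Rinv_opp in Hratio.
  pose proof (Rinv_0_lt_compat (2 + t) ltac:(lra)); nra.
Qed.

Lemma r_lt_37_before_k (n : nat) : (2 <= n)%nat -> (n < k)%nat -> r n c < 37.
Proof.
  intros Hn Hnk; destruct Hk as [_ [_ Hbefore]].
  pose proof (r_sub_2_ge n Hn).
  apply small_of_ratio_lt_36 with c; [lra | unfold c; lra |].
  exact (Hbefore n ltac:(lia) Hnk).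
Qed.

Lemma r_sub_2_le_1400 (n : nat) : (2 <= n)%nat -> (n <= k)%nat -> r n c - 2 <= 1400.
Proof.
  intros Hn Hnk.
  destruct (Nat.eq_dec n 2) as [-> | Hn2]; [rewrite r_2; nra |].
  replace n with (S (n - 1)) by lia; rewrite r_succ_sub_2.
  pose proof (r_lt_37_before_k (n - 1) ltac:(lia) ltac:(lia)).
  pose proof (r_sub_2_ge (n - 1) ltac:(lia)).
  nra.
Qed.

Lemma abs_r_le (n : nat) : (1 <= n)%nat -> (n <= k)%nat ->
  Rabs (r n c) <= 2 + exp 175 * 4 ^ (n - 1) * t.
Proof.
  intros Hn1 Hnk.
  assert (1 <= exp 175) by (rewrite <- exp_0; apply exp_le_compat; lra).
  destruct (Nat.eq_dec n 1) as [-> | Hn].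
  - replace (r 1 c) with (- 2 - t) by (unfold c; simpl; ring).
    rewrite Rabs_left by lra; rewrite Nat.sub_diag, pow_O; nra.
  - pose proof (r_sub_2_ge n ltac:(lia)).
    rewrite Rabs_right by lra.
    replace n with ((n - 2) + 2)%nat in * by lia.
    replace ((n - 2) + 2 - 1)%nat with ((n - 2) + 1)%nat by lia.
    pose proof (r_sub_2_le (n - 2) (r_sub_2_le_1400 (n - 2 + 2) ltac:(lia) Hnk)); lra.
Qed.

Lemma pow4_k_mul_le : 4 ^ k * t <= 840.
Proof.
  pose proof is_k_ge_2.
  destruct (Nat.eq_dec k 2) as [-> | Hk2]; [simpl; lra |].
  pose proof (r_lt_37_before_k (k - 1) ltac:(lia) ltac:(lia)).
  pose proof (r_sub_2_lower (k - 3)) as Hlow.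
  replace (k - 3 + 2)%nat with (k - 1)%nat in Hlow by lia.
  replace (4 ^ k) with (4 ^ (k - 3) * 4 ^ 3) by (rewrite <- pow_add; f_equal; lia).
  assert (0 < 4 ^ (k - 3)) by (apply pow_lt; lra).
  simpl (4 ^ 3); nra.
Qed.

End Escape.

End Orbit.

Theorem mainTheorem6 :
  exists C0 C1 : R, 0 < C0 /\ 0 < C1 /\
    forall t : R, 0 < t -> t < 1 ->
      let c := -2 - t in
      exists k : nat, is_k c k /\
        (forall n : nat, (1 <= n)%nat -> (n <= k)%nat ->
           Rabs (r n c) <= 2 + C0 * 4 ^ (n - 1) * t) /\
        t <= C1 / 4 ^ k.
Proof.
  exists (exp 175), 840; split; [apply exp_pos | split; [lra |]].
  intros t Ht0 Ht1 c.
  destruct (exists_is_k t Ht0 Ht1) as [k Hk].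
  exists k; split; [exact Hk | split].
  - exact (abs_r_le t Ht0 Ht1 k Hk).
  - pose proof (pow4_k_mul_le t Ht0 Ht1 k Hk).
    assert (0 < 4 ^ k) by (apply pow_lt; lra).
    apply Rmult_le_reg_r with (4 ^ k); [lra |].
    unfold Rdiv; rewrite Rmult_assoc, Rinv_l by lra; lra.
Qed.
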